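(* Let $k\ge 3$ be an integer and $n=2k-1$. For every positive integer $s$, $$\alpha\big(I_{B_{2k-1}}^{(s(2k-3))}\big)=s(2k-1).$$
   Context: Let $\mathbb{K}$ be a field (the paper also calls it $k$). $Q_n$ is the cycle graph on vertices $1,\dots,n$ (edges $\{i,i+1\}$ for $1\le i\le n-1$ and $\{n,1\}$). $B_n$ is the simplicial complex on $\{0,\dots,n+1\}$ whose facets are $\{0,i,j\}$ and $\{n+1,i,j\}$ for each edge $\{i,j\}$ of $Q_n$ (boundary of the bipyramid over the $n$-gon), and $I_{B_n}\subset R=\mathbb{K}[x_0,\dots,x_{n+1}]$ is its Stanley-Reisner ideal, generated by $\prod_{i\in\tau}x_i$ over non-faces $\tau$. For a homogeneous ideal $I$, $I^{(m)}=R\cap\bigcap_{P\in\mathrm{Ass}(I)}I^mR_P$ and $\alpha(I)=\min\{t: I_t\ne 0\}$. *)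

From HB Require Import structures.
From mathcomp Require Import all_boot all_algebra.
From mathcomp Require Import mpoly.

Set Implicit Arguments.
Unset Strict Implicit.
Unset Printing Implicit Defensive.
Import GRing.Theory.
Local Open Scope ring_scope.

Definition ideal_gen (R : comNzRingType) (S : R -> Prop) : R -> Prop :=
  fun f => exists l : seq (R * R),
    (forall p, p \in l -> S p.2) /\ f = \sum_(p <- l) p.1 * p.2.

Definition ideal_pow (R : comNzRingType) (I : R -> Prop) (m : nat) : R -> Prop :=
  ideal_gen (fun f => exists s : seq R,
    size s = m /\ (forall x, x \in s -> I x) /\ f = \prod_(x <- s) x).

Definition is_ideal (R : comNzRingType) (P : R -> Prop) : Prop :=
  [/\ P 0, (forall a b, P a -> P b -> P (a + b)) & (forall r a, P a -> P (r * a))].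

Definition is_prime_ideal (R : comNzRingType) (P : R -> Prop) : Prop :=
  [/\ is_ideal P, ~ P 1 & (forall a b, P (a * b) -> P a \/ P b)].

Definition Ass (R : comNzRingType) (I : R -> Prop) (P : R -> Prop) : Prop :=
  is_prime_ideal P /\ exists f : R, forall g, P g <-> I (g * f).

(* Symbolic power I^(m) = R ∩ ⋂_{P ∈ Ass(I)} I^m R_P ;
   f ∈ I^m R_P ∩ R  iff  g f ∈ I^m for some g ∉ P. *)
Definition symbolic_power (R : comNzRingType) (I : R -> Prop) (m : nat) : R -> Prop :=
  fun f => forall P, Ass I P -> exists g, ~ P g /\ ideal_pow I m (g * f).

Definition is_homog (N : nat) (K : comNzRingType) (d : nat) (p : {mpoly K[N]}) : bool :=
  all (fun m => mdeg m == d) (msupp p).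

Definition alpha_eq (N : nat) (K : comNzRingType) (J : {mpoly K[N]} -> Prop) (a : nat) : Prop :=
  (exists f, [/\ J f, f != 0 & is_homog a f]) /\
  (forall t f, J f -> f != 0 -> is_homog t f -> (a <= t)%N).

Definition cyc_adj (n i j : nat) : bool :=
  [&& (1 <= i <= n)%N, (1 <= j <= n)%N &
      [|| j == i.+1, i == j.+1, (i == 1%N) && (j == n) | (i == n) && (j == 1%N)]].

(* Faces of B_n on vertex set {0,...,n+1} = 'I_(n.+2): subsets of some facet
   {0,i,j} or {n+1,i,j} with {i,j} an edge of Q_n. *)
Definition B_face (n : nat) (tau : {set 'I_(n.+2)}) : bool :=
  [exists i : 'I_(n.+2), exists j : 'I_(n.+2),
     cyc_adj n i j &&
     ((tau \subset [set ord0; i; j]) || (tau \subset [set ord_max; i; j]))].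

Definition SR_ideal_B (K : fieldType) (n : nat) : {mpoly K[n.+2]} -> Prop :=
  ideal_gen (fun f => exists tau : {set 'I_(n.+2)},
    ~~ B_face tau /\ f = \prod_(i in tau) 'X_i).
Arguments SR_ideal_B K n : clear implicits.

From mathcomp Require Import all_boot all_algebra mpoly zify ring.

Set Implicit Arguments.
Unset Strict Implicit.
Unset Printing Implicit Defensive.
Import GRing.Theory.
Local Open Scope ring_scope.

(* Let I be the Stanley-Reisner ideal of B_n, n >= 4, and m = s(n-2).  For a
   facet F = {c, a, b} the colon ideal P_F = (I : x_F) is an associated prime:
   it consists of the polynomials all of whose monomials involve a variable
   outside F.  Each generator of I has a variable outside F, so every element of
   I^m R_{P_F} \cap R has all its monomials of degree >= m in the variables
   outside F.  Adding these bounds over the 2n facets {c, i, i+1} shows that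
   every monomial of an element of I^(m) has degree >= mn/(n-2) = sn.
   Conversely, every associated prime misses the variables of some facet
   {c, a, b}; pairing each other cycle vertex v with a non-neighbour p(v) in
   {a, b} gives
     prod_v x_(p v)^s * (x_1 ... x_n)^s = (x_a x_b)^s prod_v (x_v x_(p v))^s in I^m,
   so the degree-sn monomial (x_1 ... x_n)^s lies in I^(m). *)

Section IdealGen.
Variables (R : comNzRingType) (S : R -> Prop).

Lemma ideal_gen0 : ideal_gen S 0.
Proof. by exists [::]; rewrite big_nil. Qed.

Lemma ideal_genD a b : ideal_gen S a -> ideal_gen S b -> ideal_gen S (a + b).
Proof.
move=> [l1 [H1 ->]] [l2 [H2 ->]]; exists (l1 ++ l2); split; last by rewrite big_cat.
by move=> p; rewrite mem_cat => /orP [] ?; [apply: H1 | apply: H2].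
Qed.

Lemma ideal_genMl r a : ideal_gen S a -> ideal_gen S (r * a).
Proof.
move=> [l [H ->]]; exists [seq (r * p.1, p.2) | p <- l]; split.
  by move=> p /mapP [q Hq ->] /=; apply: H.
by rewrite big_map mulr_sumr; apply: eq_bigr => p _; rewrite mulrA.
Qed.

Lemma mem_ideal_gen a : S a -> ideal_gen S a.
Proof.
move=> Ha; exists [:: (1, a)]; rewrite big_seq1 mul1r; split=> // p.
by rewrite inE => /eqP ->.
Qed.

Lemma ideal_gen_ind (P : R -> Prop) :
  P 0 -> (forall a b, P a -> P b -> P (a + b)) -> (forall r a, S a -> P (r * a)) ->
  forall a, ideal_gen S a -> P a.
Proof.
move=> P0 PD PM a [l [H ->]]; elim: l H => [|p l IH] H; first by rewrite big_nil.
rewrite big_cons; apply: PD; first by apply/PM/H; rewrite inE eqxx.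
by apply: IH => q Hq; apply: H; rewrite inE Hq orbT.
Qed.

End IdealGen.

Section IdealProd.
Variables (R : comNzRingType) (J : R -> Prop).

Definition ideal_prod (m : nat) (f : R) : Prop :=
  exists s : seq R, size s = m /\ (forall x, x \in s -> J x) /\ f = \prod_(x <- s) x.

Lemma ideal_prod_pow m f : ideal_prod m f -> ideal_pow J m f.
Proof. by move=> Hf; rewrite -[f]mul1r; apply/ideal_genMl/mem_ideal_gen. Qed.

Lemma ideal_prod0 : ideal_prod 0 1.
Proof. by exists [::]; rewrite big_nil. Qed.

Lemma ideal_prodM a b x y : ideal_prod a x -> ideal_prod b y -> ideal_prod (a + b) (x * y).
Proof.
move=> [l1 [<- [H1 ->]]] [l2 [<- [H2 ->]]]; exists (l1 ++ l2).
split; first by rewrite size_cat.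
split; last by rewrite big_cat.
by move=> z; rewrite mem_cat => /orP [] ?; [apply: H1 | apply: H2].
Qed.

Lemma ideal_prodX y e : J y -> ideal_prod e (y ^+ e).
Proof.
move=> Hy; elim: e => [|e IH]; first exact: ideal_prod0.
rewrite exprS -add1n; apply: ideal_prodM IH; exists [:: y]; rewrite big_seq1.
by split=> //; split=> // x; rewrite inE => /eqP ->.
Qed.

Lemma ideal_prod_bigX (I : finType) (A : {pred I}) (F : I -> R) e :
  (forall i, i \in A -> J (F i)) -> ideal_prod (e * #|A|) (\prod_(i in A) F i ^+ e).
Proof.
move=> HF; rewrite -big_enum cardE.
have : all (mem A) (enum A) by apply/allP => i; rewrite mem_enum.
elim: (enum A) => [_|i r IH /= /andP [Hi Hr]]; first by rewrite big_nil muln0; exact: ideal_prod0.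
rewrite big_cons mulnS.
exact: ideal_prodM (ideal_prodX _ (HF i Hi)) (IH Hr).
Qed.

End IdealProd.

Lemma prime_notin_prod (R : comNzRingType) (P : R -> Prop) (I : Type) (r : seq I)
    (Q : pred I) (F : I -> R) :
  is_prime_ideal P -> (forall i, Q i -> ~ P (F i)) -> ~ P (\prod_(i <- r | Q i) F i).
Proof. by case=> _ P1 PM HF; apply: (big_ind (fun x => ~ P x)) => // x y Hx Hy /PM []. Qed.

Section RmorphMultiples.
Variables (R A : comNzRingType) (phi : {rmorphism R -> A}).

Lemma rmorph_ideal_gen_dvd (S : R -> Prop) (e : A) :
  (forall y, S y -> exists r, phi y = e * r) ->
  forall x, ideal_gen S x -> exists r, phi x = e * r.
Proof.
move=> HS; apply: ideal_gen_ind; first by exists 0; rewrite rmorph0 mulr0.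
  by move=> a b [r1 Ha] [r2 Hb]; exists (r1 + r2); rewrite rmorphD Ha Hb mulrDr.
by move=> r y /HS [r1 Hy]; exists (phi r * r1); rewrite rmorphM Hy mulrCA.
Qed.

Lemma rmorph_ideal_pow_dvd (J : R -> Prop) (e : A) m :
  (forall y, J y -> exists r, phi y = e * r) ->
  forall x, ideal_pow J m x -> exists r, phi x = e ^+ m * r.
Proof.
move=> HJ; apply: rmorph_ideal_gen_dvd => _ [l [<- [Hl ->]]].
elim: l Hl => [|y l IH] Hl; first by exists 1; rewrite big_nil rmorph1 mulr1.
have [r1 Hy] := HJ y (Hl y (mem_head y l)).
have [r2 Hl'] : exists r, phi (\prod_(x <- l) x) = e ^+ size l * r.
  by apply: IH => z Hz; apply: Hl; rewrite inE Hz orbT.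
by exists (r1 * r2); rewrite big_cons rmorphM Hy Hl' exprS mulrACA.
Qed.

End RmorphMultiples.

Lemma Xn_dvd_cancel (A : idomainType) (p q r : {poly A}) m :
  q`_0 != 0 -> p * q = 'X^m * r -> exists p', p = 'X^m * p'.
Proof.
move=> q0; elim: m p r => [|m IH] p r pq; first by exists p; rewrite expr0 mul1r.
have p0 : p`_0 = 0.
  move/(congr1 (fun x : {poly A} => x`_0))/eqP: pq.
  by rewrite coef0M coefXnM /= mulf_eq0 (negbTE q0) orbF => /eqP.
have /factor_theorem [p1 Ep] : root p 0 by rewrite /root horner_coef0 p0.
rewrite {}Ep polyC0 subr0 in pq *.
have /IH [p' ->] : p1 * q = 'X^m * r.
  apply: (@mulfI _ 'X); first by rewrite polyX_eq0.
  by rewrite mulrA (mulrC 'X p1) pq mulrA -exprS.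
by exists p'; rewrite exprS mulrC mulrA.
Qed.

Section OuterGrading.
Variables (K : idomainType) (N : nat).
Notation R := {mpoly K[N]}.
Implicit Types (S : {set 'I_N}) (p : R) (w : 'X_{1..N}).

Lemma mpolyX_neq0 w : 'X_[w] != 0 :> R.
Proof. by apply/eqP => H; have := msuppX K w; rewrite H msupp0. Qed.

Lemma ideal_gen_mul_msupp (G : R -> Prop) p q :
  (forall w, w \in msupp p -> ideal_gen G ('X_[w] * q)) -> ideal_gen G (p * q).
Proof.
move=> H; rewrite [p]mpolyE mulr_suml big_seq.
apply: big_ind => [|a b|w Hw]; [exact: ideal_gen0 | exact: ideal_genD |].
by rewrite -mul_mpolyC -mulrA; apply/ideal_genMl/H.
Qed.

Definition mnm_supp w : {set 'I_N} := [set v | w v != 0%N].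

Definition outdeg S w : nat := (\sum_(v < N | v \notin S) w v)%N.

Lemma outdeg_eq0 S w : (outdeg S w == 0%N) = (mnm_supp w \subset S).
Proof.
rewrite sum_nat_eq0; apply/forall_inP/subsetP => [H v | H v HvS].
  by rewrite inE; apply: contraR => /H ->.
by apply: contraR HvS => Hv; apply: H; rewrite inE.
Qed.

(* [psi S] substitutes [t * x_v] for [x_v] when [v \notin S], so the coefficient
   of [t^j] in [psi S p] is the part of [p] of degree [j] in the variables outside [S]. *)
Definition tvar S v : {poly R} := if v \in S then ('X_v)%:P else ('X_v)%:P * 'X.

Definition psi S : {rmorphism R -> {poly R}} := mmap (polyC \o @mpolyC N K) (tvar S).

Lemma psiXU S v : psi S 'X_v = tvar S v.
Proof. by rewrite /= mmapX mmap1U. Qed.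

Lemma psiX S w : psi S 'X_[w] = ('X_[w])%:P * 'X^(outdeg S w).
Proof.
rewrite /= mmapX /mmap1.
rewrite (eq_bigr (fun v => ('X_v ^+ w v)%:P * 'X^(if v \notin S then w v else 0%N))); last first.
  by move=> v _; rewrite /tvar; case: (v \in S); rewrite /= ?expr0 ?mulr1 ?exprMn rmorphXn.
rewrite big_split /= -rmorph_prod -mpolyXE_id prodrXr /outdeg.
by rewrite [in RHS]big_mkcond.
Qed.

Lemma psiZX S c w : psi S (c *: 'X_[w]) = (c *: 'X_[w])%:P * 'X^(outdeg S w).
Proof.
by rewrite -mul_mpolyC rmorphM psiX /= mmapC /= mulrA -polyCM mul_mpolyC.
Qed.

Lemma coef_psi S p j w :
  ((psi S p)`_j)@_w = if outdeg S w == j then p@_w else 0.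
Proof.
rewrite {1}[p]mpolyE rmorph_sum coef_sum raddf_sum /=.
under eq_bigr => u _ do rewrite psiZX coefCM coefXn mulr_natr mcoeffMn mcoeffZ mcoeffX.
case: (eqVneq (outdeg S w) j) => [<-|Hj].
  rewrite [in RHS](mpolyE p) raddf_sum /=; apply: eq_bigr => u _; rewrite mcoeffZ mcoeffX.
  by case: (eqVneq u w) => [->|_]; rewrite ?eqxx ?mulr0 ?mul0rn.
rewrite big1 // => u _.
by case: (eqVneq u w) => [->|_]; rewrite ?mulr0 ?mul0rn // eq_sym (negbTE Hj) mulr0n.
Qed.

Lemma psi_coef_eq0 S p j w : (psi S p)`_j = 0 -> w \in msupp p -> outdeg S w != j.
Proof.
move=> Hp; apply: contraTneq => Hj; rewrite -mcoeff_eq0.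
by have := coef_psi S p j w; rewrite Hp mcoeff0 Hj eqxx => <-.
Qed.

Lemma psi_prod_set S : psi S (\prod_(v in S) 'X_v) = (\prod_(v in S) 'X_v)%:P.
Proof.
by rewrite !rmorph_prod; apply: eq_bigr => v Hv; rewrite psiXU /tvar Hv.
Qed.

End OuterGrading.

Arguments tvar {K N} S v.
Arguments psi {K N} S.

Lemma alpha_eq_mdeg (N : nat) (K : comNzRingType) (J : {mpoly K[N]} -> Prop) a f :
  J f -> f != 0 -> is_homog a f ->
  (forall g w, J g -> w \in msupp g -> (a <= mdeg w)%N) -> alpha_eq J a.
Proof.
move=> Jf f0 homf low; split; first by exists f.
move=> t g Jg g0 /allP homg; case E: (msupp g) => [|w r].
  by move/eqP: E; rewrite msupp_eq0 (negbTE g0).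
have Hw : w \in msupp g by rewrite E mem_head.
by rewrite -(eqP (homg w Hw)); apply: low Jg Hw.
Qed.

Lemma cyc_adjP n i j :
  reflect [/\ (1 <= i <= n)%N, (1 <= j <= n)%N &
             (j = i.+1 \/ i = j.+1 \/ (i = 1 /\ j = n) \/ (i = n /\ j = 1))%N]
          (cyc_adj n i j).
Proof.
apply: (iffP and3P) => [[Hi Hj /or4P H]|[Hi Hj H]]; split => //.
  by case: H => [/eqP|/eqP|/andP [/eqP ? /eqP ?]|/andP [/eqP ? /eqP ?]]; tauto.
by case: H => [->|[->|[[-> ->]|[-> ->]]]]; rewrite !eqxx ?orbT.
Qed.

Lemma cyc_adjC n i j : cyc_adj n i j = cyc_adj n j i.
Proof. by apply/cyc_adjP/cyc_adjP => [] [? ? ?]; split => //; lia. Qed.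

Lemma cyc_adj_triangle n u v w :
  (3 < n)%N -> cyc_adj n u v -> cyc_adj n v w -> ~~ cyc_adj n u w.
Proof. by move=> ? /cyc_adjP [? ? ?] /cyc_adjP [? ? ?]; apply/cyc_adjP => [] [? ? ?]; lia. Qed.

Lemma cyc_adj_neq n u v :
  (1 < n)%N -> cyc_adj n u v -> [/\ u <> v, (0 < u <= n)%N & (0 < v <= n)%N].
Proof. by move=> ? /cyc_adjP [? ? ?]; split; lia. Qed.

Section Bipyramid.
Variable n : nat.
Hypothesis n_gt1 : (1 < n)%N.
Notation V := 'I_n.+2.
Implicit Types (F tau : {set V}) (a b c v : V).

Lemma B_face_sub tau F : B_face F -> tau \subset F -> B_face tau.
Proof.
move=> /existsP [i /existsP [j /andP [Hij HF]]] tauF.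
apply/existsP; exists i; apply/existsP; exists j.
by rewrite Hij /=; case/orP: HF => H; rewrite (subset_trans tauF H) ?orbT.
Qed.

Definition B_facet F c a b :=
  [/\ (c == ord0) || (c == ord_max), cyc_adj n a b & F = [set c; a; b]].

Lemma B_facet_face F c a b : B_facet F c a b -> B_face F.
Proof.
case=> Hc Hab ->; apply/existsP; exists a; apply/existsP; exists b.
by rewrite Hab /=; case/orP: Hc => /eqP ->; rewrite subxx ?orbT.
Qed.

Lemma B_face_facet tau : B_face tau -> exists F c a b, B_facet F c a b /\ tau \subset F.
Proof.
move=> /existsP [i /existsP [j /andP [Hij /orP [H|H]]]].
  by exists [set ord0; i; j], ord0, i, j; split; first split; rewrite ?eqxx.
by exists [set ord_max; i; j], ord_max, i, j; split; first split; rewrite ?eqxx ?orbT.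
Qed.

Lemma B_facet_maximal F c a b v : B_facet F c a b -> v \notin F -> ~~ B_face (v |: F).
Proof.
case=> Hc Hab -> Hv; apply/negP => /existsP [i /existsP [j /andP [Hij Hs]]].
have [? ? ?] := cyc_adj_neq n_gt1 Hab; have [? ? ?] := cyc_adj_neq n_gt1 Hij.
move: Hv Hc; rewrite !inE -!val_eqE /= => Hv Hc.
by case/orP: Hs => /subsetP Hs; move: (Hs v) (Hs c) (Hs a) (Hs b);
  rewrite !inE !eqxx /= ?orbT -!val_eqE /=; lia.
Qed.

Lemma B_nonedge_nonface a b :
  (0 < a <= n)%N -> (0 < b <= n)%N -> a != b -> ~~ cyc_adj n a b -> ~~ B_face [set a; b].
Proof.
move=> Ha Hb; rewrite -val_eqE => /= Hne Hadj.
apply/negP => /existsP [i /existsP [j /andP [Hij Hs]]].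
have [? ? ?] := cyc_adj_neq n_gt1 Hij.
have : ((a == i :> nat) && (b == j :> nat)) || ((a == j :> nat) && (b == i :> nat)).
  by case/orP: Hs => /subsetP Hs; move: (Hs a) (Hs b);
     rewrite !inE !eqxx /= ?orbT -!val_eqE /=; lia.
case/orP => /andP [/eqP Hai /eqP Hbj]; move: Hadj; rewrite Hai Hbj ?Hij //.
by rewrite cyc_adjC Hij.
Qed.

End Bipyramid.

Section StanleyReisner.
Variables (K : fieldType) (n : nat).
Hypothesis n_gt1 : (1 < n)%N.
Notation V := 'I_n.+2.
Notation R := {mpoly K[n.+2]}.
Notation I := (SR_ideal_B K n).
Implicit Types (F : {set V}) (a b c v : V) (w : 'X_{1..n.+2}).

Lemma SR_ideal_B_mono w : ~~ B_face (mnm_supp w) -> I 'X_[w].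
Proof.
move=> Hw; set u := (\sum_(v in mnm_supp w) U_(v))%MM.
have uw : (u <= w)%MM.
  apply/mnm_lepP => j; rewrite /u mnm_sumE (big_mkcond (mem (mnm_supp w))) /= (bigD1 j) //= big1.
    by rewrite addn0 mnm1E eqxx; case: ifP => //; rewrite inE; lia.
  by move=> i Hij; case: ifP => // _; rewrite mnm1E (negbTE Hij).
rewrite -(submK uw) mpolyXD; apply/ideal_genMl/mem_ideal_gen.
by exists (mnm_supp w); rewrite /u -mprodXE.
Qed.

Lemma exists_face_monomial h : ~ I h -> exists2 u, u \in msupp h & B_face (mnm_supp u).
Proof.
move=> Ih; pose nonface (u : 'X_{1..n.+2}) := ~~ B_face (mnm_supp u).
have [/allP Hall|/allPn [u Hu /negbNE Hf]] := boolP (all nonface (msupp h)).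
  case: Ih; rewrite -[h]mulr1; apply: ideal_gen_mul_msupp => w Hw.
  by rewrite mulr1; apply/SR_ideal_B_mono/Hall.
by exists u.
Qed.

Section Facet.
Variables (F : {set V}) (c a b : V).
Hypothesis HF : B_facet F c a b.

(* A nonface is not contained in [F], so every generator of [I] picks up a factor [t]. *)
Lemma SR_ideal_B_psi x : I x -> exists r, psi F x = 'X * r.
Proof.
apply: rmorph_ideal_gen_dvd => _ [tau [Htau ->]].
have [v /andP [Hvt HvF]] : exists v, (v \in tau) && (v \notin F).
  apply/existsP; apply: contraR Htau => /existsPn H; apply: B_face_sub (B_facet_face HF) _.
  by apply/subsetP => v Hv; have := H v; rewrite Hv /= negbK.
rewrite rmorph_prod (bigD1 v) //= psiXU /tvar (negbTE HvF).
by exists (('X_v)%:P * \prod_(i in tau | i != v) psi F 'X_i); rewrite mulrCA mulrA.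
Qed.

Lemma SR_ideal_B_pow_psi m x : ideal_pow I m x -> exists r, psi F x = 'X^m * r.
Proof. by move: x; apply: rmorph_ideal_pow_dvd; exact: SR_ideal_B_psi. Qed.

Definition colon_facet (g : R) : Prop := I (g * \prod_(v in F) 'X_v).

Lemma colon_facetE g : colon_facet g <-> (psi F g)`_0 = 0.
Proof.
have xF0 : \prod_(v in F) 'X_v != 0 :> R by apply/prodf_neq0 => v _; apply: mpolyX_neq0.
split.
  move=> /SR_ideal_B_psi [r]; rewrite rmorphM psi_prod_set.
  move/(congr1 (fun p : {poly R} => p`_0))/eqP.
  by rewrite coefMC coefXM eqxx mulf_eq0 (negbTE xF0) orbF => /eqP.
move=> g0; apply: ideal_gen_mul_msupp => w Hw.
have [v HvF wv] : exists2 v, v \notin F & w v != 0%N.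
  have := psi_coef_eq0 g0 Hw; rewrite outdeg_eq0 => /subsetPn [v].
  by rewrite inE => wv HvF; exists v.
have Uw : (U_(v) <= w)%MM by rewrite lep1mP.
rewrite -(submK Uw) mpolyXD -mulrA -big_setU1 //=; apply/ideal_genMl/mem_ideal_gen.
by exists (v |: F); split=> //; apply: B_facet_maximal HF HvF.
Qed.

Lemma colon_facet_Ass : Ass I colon_facet.
Proof.
split; last by exists (\prod_(v in F) 'X_v).
split; first split.
- by rewrite /colon_facet mul0r; apply: ideal_gen0.
- by move=> x y Hx Hy; rewrite /colon_facet mulrDl; apply: ideal_genD.
- by move=> r x Hx; rewrite /colon_facet -mulrA; apply: ideal_genMl.
- by rewrite colon_facetE rmorph1 coefC eqxx; apply/eqP; rewrite oner_eq0.
move=> x y; rewrite !colon_facetE rmorphM coef0M => /eqP; rewrite mulf_eq0.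
by case/orP => /eqP; [left | right].
Qed.

Lemma symbolic_power_outdeg m f w : symbolic_power I m f -> w \in msupp f -> (m <= outdeg F w)%N.
Proof.
move=> Hf Hw; have [g [Pg /SR_ideal_B_pow_psi [r]]] := Hf _ colon_facet_Ass.
have g0 : (psi F g)`_0 != 0 by apply: contra_not_neq Pg => /colon_facetE.
rewrite rmorphM mulrC => /(Xn_dvd_cancel g0) [r' fr'].
rewrite leqNgt; apply/negP => Hlt.
suff : outdeg F w != outdeg F w by rewrite eqxx.
by apply: psi_coef_eq0 Hw; rewrite fr' coefXnM Hlt.
Qed.

Lemma colon_facet_var h u v :
  u \in msupp h -> mnm_supp u \subset F -> v \in F -> ~ I ('X_v * h).
Proof.
move=> Hu uF vF /SR_ideal_B_psi [r]; rewrite rmorphM psiXU /tvar vF.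
move/(congr1 (fun p : {poly R} => p`_0))/eqP.
rewrite coefCM coefXM eqxx mulf_eq0 (negbTE (mpolyX_neq0 _ _)) /=.
by move/eqP/psi_coef_eq0/(_ Hu); rewrite outdeg_eq0 uF.
Qed.

Lemma mdeg_facet w : (outdeg F w + (w c + w a + w b))%N = mdeg w.
Proof.
case: HF => Hc Hab HFE; have [Hne Ha Hb] := cyc_adj_neq n_gt1 Hab.
move: Hc; rewrite -!val_eqE /= => Hc.
have cab : c \notin [set a; b] by rewrite !inE -!val_eqE /=; lia.
have ab : a \notin [set b] by rewrite !inE -!val_eqE /=; lia.
rewrite mdegE (bigID (mem F)) /= addnC; congr (_ + _)%N.
by rewrite HFE -setUA big_setU1 //= big_setU1 //= big_set1 addnA.
Qed.

End Facet.

Lemma Ass_SR_facet P : Ass I P ->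
  exists F c a b, B_facet F c a b /\ forall v, v \in F -> ~ P 'X_v.
Proof.
case=> [[_ P1 _] [h HP]].
have Ih : ~ I h by move=> H; apply/P1/HP; rewrite mul1r.
have [u Hu /B_face_facet [F [c [a [b [HF uF]]]]]] := exists_face_monomial Ih.
exists F, c, a, b; split=> // v vF /HP.
exact: (colon_facet_var HF Hu uF vF).
Qed.

End StanleyReisner.

Section Cycle.
Variables (K : fieldType) (n : nat).
Hypothesis n_gt3 : (3 < n)%N.
Notation V := 'I_n.+2.
Notation R := {mpoly K[n.+2]}.
Notation I := (SR_ideal_B K n).
Implicit Types (a b c v : V) (w : 'X_{1..n.+2}).

Let n_gt1 : (1 < n)%N := ltnW (ltnW n_gt3).

Definition cycle_vertices : {set V} := ~: [set ord0; ord_max].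

Lemma mem_cycle_vertices (v : V) : (v \in cycle_vertices) = (0 < v <= n)%N.
Proof. by rewrite !inE -!val_eqE /=; have := ltn_ord v; case: (nat_of_ord v) => [|v'] /=; lia. Qed.

Lemma card_cycle_vertices : #|cycle_vertices| = n.
Proof.
have := cardsC [set (ord0 : V); ord_max]; rewrite cards2 card_ord -val_eqE /=.
by move=> H; apply/eqP; rewrite -(eqn_add2l 2) H.
Qed.

Definition cycle_monomial s : R := \prod_(v in cycle_vertices) 'X_v ^+ s.

Lemma cycle_monomial_neq0 s : cycle_monomial s != 0.
Proof. by apply/prodf_neq0 => v _; rewrite expf_neq0 // mpolyX_neq0. Qed.

Lemma cycle_monomial_homog s : is_homog (s * n) (cycle_monomial s).
Proof.
rewrite /cycle_monomial mprodXnE /is_homog msuppX /= andbT mdeg_sum.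
under eq_bigr => v _ do rewrite mdegMn mdeg1 mul1n.
by rewrite sum_nat_const card_cycle_vertices mulnC.
Qed.

(* Since [Q_n] has no triangles, a cycle vertex off the edge [{a, b}] is adjacent
   to at most one of [a], [b]; [partner a b v] is one it is not adjacent to. *)
Definition partner (a b v : V) : V := if cyc_adj n v a then b else a.

Lemma partner_nonface a b v :
  cyc_adj n a b -> v \in cycle_vertices :\: [set a; b] -> ~~ B_face [set v; partner a b v].
Proof.
move=> ab /setDP [+ vab]; rewrite mem_cycle_vertices => v_cyc.
move: vab; rewrite !inE -!val_eqE /= => vab.
have [_ a_cyc b_cyc] := cyc_adj_neq n_gt1 ab.
apply: B_nonedge_nonface => //; rewrite /partner.
- by case: ifP.
- by case: ifP; rewrite -val_eqE /=; lia.
case: ifP => [va_adj|-> //]; exact: cyc_adj_triangle n_gt3 va_adj ab.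
Qed.

Lemma cycle_monomial_mul_partner s a b : cyc_adj n a b ->
  ideal_pow I (s * (n - 2))
    ((\prod_(v in cycle_vertices :\: [set a; b]) 'X_(partner a b v) ^+ s) * cycle_monomial s).
Proof.
move=> ab; have [a_ne_b a_cyc b_cyc] := cyc_adj_neq n_gt1 ab.
have ab_cyc : [set a; b] \subset cycle_vertices.
  by apply/subsetP => v /set2P [] ->; rewrite mem_cycle_vertices.
rewrite /cycle_monomial [X in _ * X](big_setID [set a; b]) /= (setIidPr ab_cyc).
rewrite mulrCA -big_split /=; apply: ideal_genMl.
under eq_bigr => v _ do rewrite -exprMn.
have -> : (n - 2 = #|cycle_vertices :\: [set a; b]|)%N.
  rewrite cardsD (setIidPr ab_cyc) cards2 card_cycle_vertices.
  by case: (a =P b) => // /(congr1 val).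
apply/ideal_prod_pow/ideal_prod_bigX => v Hv; apply: mem_ideal_gen.
exists [set v; partner a b v]; split; first exact: partner_nonface.
rewrite big_setU1 ?big_set1 1?mulrC // inE; apply: contraTneq Hv => ->.
by rewrite /partner !inE; case: ifP; rewrite eqxx ?orbT ?andbF.
Qed.

Lemma cycle_monomial_symbolic s : symbolic_power I (s * (n - 2)) (cycle_monomial s).
Proof.
move=> P HP; have [F [c [a [b [[_ ab ->] XnotP]]]]] := Ass_SR_facet n_gt1 HP.
exists (\prod_(v in cycle_vertices :\: [set a; b]) 'X_(partner a b v) ^+ s).
split; last exact: cycle_monomial_mul_partner.
apply: prime_notin_prod => [|v _]; first by case: HP.
rewrite -(subn0 s) -prodr_const_nat; apply: prime_notin_prod => [|_ _]; first by case: HP.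
by apply: XnotP; rewrite /partner; case: ifP; rewrite !inE eqxx ?orbT.
Qed.

Definition cyc (i : 'I_n) : V := inord i.+1.

Lemma cyc_facet c i : (c == ord0) || (c == ord_max) ->
  B_facet [set c; cyc i; cyc (ordS i)] c (cyc i) (cyc (ordS i)).
Proof.
move=> Hc; split=> //; apply/cyc_adjP; have i_lt := ltn_ord i.
have Si : (i.+1 %% n = if i.+1 == n then 0 else i.+1)%N.
  by case: eqP => [->|?]; rewrite ?modnn // modn_small //; lia.
rewrite /cyc /= Si.
case: (i.+1 =P n) => H; rewrite !inordK; try split; lia.
Qed.

Lemma mdeg_cyc w : mdeg w = (w ord0 + \sum_(i < n) w (cyc i) + w ord_max)%N.
Proof.
rewrite mdegE big_ord_recl big_ord_recr /= addnA; congr (_ + _ + w _)%N.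
  apply: eq_bigr => i _; congr (w _); apply: val_inj.
  by rewrite /= /bump leq0n inordK //; have := ltn_ord i; lia.
exact: val_inj.
Qed.

Lemma symbolic_power_mdeg s f w :
  symbolic_power I (s * (n - 2)) f -> w \in msupp f -> (s * n <= mdeg w)%N.
Proof.
move=> Hf Hw; set m := (s * (n - 2))%N; set X := (\sum_(i < n) w (cyc i))%N.
have cone_ineq c : (c == ord0) || (c == ord_max) -> (n * m + n * w c + 2 * X <= n * mdeg w)%N.
  move=> Hc; have facet_ineq i : (m + w c + w (cyc i) + w (cyc (ordS i)) <= mdeg w)%N.
    have HF := cyc_facet i Hc; rewrite -(mdeg_facet n_gt1 HF w).
    by have := symbolic_power_outdeg n_gt1 HF Hf Hw; lia.
  have : (\sum_(i < n) (m + w c + w (cyc i) + w (cyc (ordS i))) <= \sum_(i < n) mdeg w)%N.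
    by apply: leq_sum => i _; exact: facet_ineq.
  rewrite !big_split /= !sum_nat_const card_ord.
  by rewrite -(reindex_inj (@ordS_inj n) (P := xpredT) (F := fun i => w (cyc i))) -/X; lia.
have H0 : (n * m + n * w ord0 + 2 * X <= n * mdeg w)%N by apply: cone_ineq; rewrite eqxx.
have HN : (n * m + n * w ord_max + 2 * X <= n * mdeg w)%N by apply: cone_ineq; rewrite eqxx orbT.
move: H0 HN; rewrite mdeg_cyc -/X; set w0 := w ord0; set wN := w ord_max => H0 HN.
have cones : (2 * n * m + 4 * X <= n * (w0 + wN) + 2 * n * X)%N by nia.
have bound : (2 * n * m <= (2 * n - 4) * (w0 + X + wN))%N by nia.
have mE : (2 * n * m = (2 * n - 4) * (s * n))%N.
  by rewrite /m (_ : 2 * n - 4 = 2 * (n - 2))%N; [ring | lia].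
by rewrite mE leq_pmul2l in bound; lia.
Qed.

Lemma alpha_symbolic_SR_ideal_B s : alpha_eq (symbolic_power I (s * (n - 2))) (s * n).
Proof.
apply: alpha_eq_mdeg (cycle_monomial_symbolic s) (cycle_monomial_neq0 s) (cycle_monomial_homog s) _.
by move=> g w; apply: symbolic_power_mdeg.
Qed.

End Cycle.

Unset Implicit Arguments.
Local Close Scope ring_scope.

Theorem proposition3p11 (K : fieldType) (k s : nat) (hk : (3 <= k)%N) (hs : (0 < s)%N) :
  alpha_eq (symbolic_power (SR_ideal_B K (2 * k - 1)) (s * (2 * k - 3)))
           (s * (2 * k - 1)).
Proof.
rewrite (_ : 2 * k - 3 = 2 * k - 1 - 2); last by lia.
by apply: alpha_symbolic_SR_ideal_B; lia.
Qed.
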